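(* Let $\mathbb{K}$ be any field and $n,s$ positive integers with $2s<n-1$. Let $\mathcal{S}$ be a linear subspace of $\mathrm{A}_n(\mathbb{K})$, and for $M\in\mathcal{S}$ let $P(M)\in\mathrm{A}_{n-1}(\mathbb{K})$ denote the upper-left $(n-1)\times(n-1)$ submatrix of $M$. Assume that $P(\mathcal{S})\subset\mathrm{WA}_{n-1,s,1}(\mathbb{K})$, that $\dim P(\mathcal{S})>a_{n-1,s,1}-(n-s-3)$, and that every matrix of $\mathcal{S}$ has rank at most $2s$. Then $\mathcal{S}$ is congruent to a subspace of $\mathrm{WA}_{n,s,1}(\mathbb{K})$.
   Context: $\mathrm{A}_p(\mathbb{K})$ denotes the $p\times p$ alternating matrices (skew-symmetric, zero diagonal). For $2s+1\le p$, $\mathrm{WA}_{p,s,1}(\mathbb{K})$ is the space of $M=(m_{i,j})\in\mathrm{A}_p(\mathbb{K})$ with $m_{i,j}=0$ whenever $i>s$, $j>s$ and $\max(i,j)>s+1$; its dimension is $a_{p,s,1}=\binom{s}{2}+s(p-s)$. Subsets $\mathcal{V},\mathcal{W}$ of $\mathrm{M}_n(\mathbb{K})$ are congruent if $\mathcal{V}=Q\mathcal{W}Q^T$ for some $Q\in\mathrm{GL}_n(\mathbb{K})$. *)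

From HB Require Import structures.
From mathcomp Require Import all_boot all_order all_algebra.
Set Implicit Arguments. Unset Strict Implicit. Unset Printing Implicit Defensive.
Import GRing.Theory.
Local Open Scope ring_scope.

Definition alternating (K : fieldType) (p : nat) (M : 'M[K]_p) : bool :=
  (M^T == - M) && [forall i, M i i == 0].

(* WA_{p,s,1}(K), with 0-based indices: the 1-based condition
   "i > s, j > s, max(i,j) > s+1" becomes "s <= i, s <= j, s+1 <= max i j". *)
Definition WA1 (K : fieldType) (p s : nat) (M : 'M[K]_p) : bool :=
  alternating M &&
  [forall i : 'I_p, forall j : 'I_p,
     ((s <= i)%N && (s <= j)%N && (s.+1 <= maxn i j)%N) ==> (M i j == 0)].

Definition a_dim (p s : nat) : nat := ('C(s, 2) + s * (p - s))%N.

Definition upleft (K : fieldType) (n : nat) (M : 'M[K]_n) : 'M[K]_(n.-1) :=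
  \matrix_(i < n.-1, j < n.-1)
     M (widen_ord (leq_pred n) i) (widen_ord (leq_pred n) j).

From HB Require Import structures.
From mathcomp Require Import all_boot all_order all_algebra.
From mathcomp Require Import zify.
Set Implicit Arguments. Unset Strict Implicit. Unset Printing Implicit Defensive.
Import GRing.Theory.
Local Open Scope ring_scope.

(* Split the indices of an n x n matrix into {0..s-1}, {s..n-2} and {n-1}.  For
   M in S, the hypothesis on P(S) kills the middle-middle block, so only the
   middle part gamma(M) of the last row has to be cleared.  We show that
   gamma(M) = sum_i a_i beta(M)_i for fixed scalars a_i, where beta(M)_i is the
   middle part of row i < s; subtracting sum_i a_i (row i) from the last row,
   and likewise for the last column, is then the required congruence.

   A skew matrix with a zero principal block beside a full-row-rank block of r
   rows has rank at least 2r, so the rank bound 2s puts gamma(M) in the span of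
   the beta(M)_i whenever these s vectors are free.  The bound on dim P(S) says
   that beta(S) has codimension at most q - 3 in the space of s-tuples of
   vectors of K^q (q = n - 1 - s).  In a space of tuples that large, every
   translate contains free tuples extending a given free family; this spreads
   the local dependence of gamma on beta from free tuples to all of S, and an
   induction on s, peeling off the first vector of the tuple (a linear map that
   is pointwise collinear to another one is a scalar multiple of it), yields
   the scalars a_i. *)

Section ImageDimension.
Variables (K : fieldType) (aT rT1 rT2 : vectType K).
Implicit Types (S : {vspace aT}) (f : 'Hom(aT, rT1)) (g : 'Hom(aT, rT2)).

Lemma dim_limg_cap_lker S f g :
  (\dim (f @: S) <= \dim (f @: (S :&: lker g)) + \dim (g @: S))%N.
Proof.
have := limg_ker_dim f S; have := limg_ker_dim g S.
have := limg_ker_dim f (S :&: lker g).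
have := dimvS (capvS (capvSl S (lker g)) (subvv (lker f))).
lia.
Qed.

Lemma dim_limg_leq S f g :
  (S :&: lker g <= lker f)%VS -> (\dim (f @: S) <= \dim (g @: S))%N.
Proof.
move=> sub; have := limg_ker_dim f S; have := limg_ker_dim g S.
have : (S :&: lker g <= S :&: lker f)%VS by rewrite subv_cap capvSl.
move/dimvS.
lia.
Qed.

End ImageDimension.

Lemma dim_lker_form (K : fieldType) (E : vectType K) (phi : 'Hom(E, 'M[K]_1)) x :
  phi x != 0 -> (\dim (lker phi)).+1 = \dim {:E}.
Proof.
move=> phix; rewrite -(limg_ker_dim phi fullv) capfv -addn1; congr (_ + _)%N.
apply/esym/anti_leq/andP; split.
  by apply: leq_trans (dimvS (subvf _)) _; rewrite dimvf /dim /=.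
rewrite lt0n dimv_eq0; apply: contraNneq phix => im0.
by rewrite -memv0 -im0 memv_img ?memvf.
Qed.

Section Families.
Variables (K : fieldType) (E : vectType K).

Definition fam_tail s (B : {ffun 'I_s.+1 -> E}) : {ffun 'I_s -> E} :=
  [ffun i => B (lift ord0 i)].

Fact fam_tail_is_linear s : linear (@fam_tail s).
Proof. by move=> a u v; apply/ffunP=> i; rewrite !ffunE. Qed.
HB.instance Definition _ s :=
  GRing.isLinear.Build K _ _ _ (@fam_tail s) (@fam_tail_is_linear s).

Definition fam_ev s (i : 'I_s) (B : {ffun 'I_s -> E}) : E := B i.

Fact fam_ev_is_linear s i : linear (@fam_ev s i).
Proof. by move=> a u v; rewrite /fam_ev !ffunE. Qed.
HB.instance Definition _ s i :=
  GRing.isLinear.Build K _ _ _ (@fam_ev s i) (@fam_ev_is_linear s i).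

Definition tailL s := linfun (@fam_tail s).
Definition evL s (i : 'I_s) := linfun (fam_ev i).

Lemma tailLE s B : tailL s B = fam_tail B. Proof. exact: lfunE. Qed.
Lemma evLE s (i : 'I_s) B : evL i B = B i. Proof. exact: lfunE. Qed.

Lemma codom_fam s (B : {ffun 'I_s.+1 -> E}) :
  codom B = B ord0 :: codom (fam_tail B).
Proof.
rewrite !codomE enum_ordSl /= -map_comp; congr (_ :: _).
by apply: eq_map => i; rewrite /= ffunE.
Qed.

Lemma fam_eq0 s (B : {ffun 'I_s.+1 -> E}) : B ord0 = 0 -> fam_tail B = 0 -> B = 0.
Proof.
move=> B0 /ffunP tl0; apply/ffunP=> i; rewrite ffunE.
by case: (unliftP ord0 i) => [j ->|->] //; have := tl0 j; rewrite !ffunE.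
Qed.

Lemma dim_head_cap_lker_tail s (V : {vspace {ffun 'I_s.+1 -> E}}) :
  \dim (evL ord0 @: (V :&: lker (tailL s))) = \dim (V :&: lker (tailL s)).
Proof.
apply: limg_dim_eq; apply/eqP; rewrite -subv0; apply/subvP=> B.
rewrite !memv_cap !memv_ker tailLE evLE memv0 => /andP[/andP[_ /eqP tl0] /eqP h0].
by rewrite (fam_eq0 h0 tl0).
Qed.

Lemma dim_fam_leq s (U : {vspace E}) (V : {vspace {ffun 'I_s -> E}}) :
  (forall B, B \in V -> forall i, B i \in U) -> (\dim V <= s * \dim U)%N.
Proof.
elim: s V => [|s IH] V VU.
  suff ->: V = 0%VS by rewrite dimv0.
  apply/eqP; rewrite -subv0; apply/subvP=> B _.
  by rewrite memv0; apply/eqP/ffunP=> [[]].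
rewrite -(limg_ker_dim (tailL s) V) -dim_head_cap_lker_tail mulSn.
apply: leq_add.
  apply/dimvS/subvP=> _ /memv_imgP[B /memv_capP[BV _] ->].
  by rewrite evLE VU.
by apply: IH => _ /memv_imgP[B BV ->] i; rewrite tailLE ffunE VU.
Qed.

End Families.

Section PointwiseMap.
Variables (K : fieldType) (E F : vectType K) (f : 'Hom(E, F)) (s : nat).

Definition fam_map (B : {ffun 'I_s -> E}) : {ffun 'I_s -> F} := [ffun i => f (B i)].

Fact fam_map_is_linear : linear fam_map.
Proof. by move=> a u v; apply/ffunP=> i; rewrite !ffunE linearP. Qed.
HB.instance Definition _ := GRing.isLinear.Build K _ _ _ fam_map fam_map_is_linear.

Definition fam_mapL := linfun fam_map.

Lemma fam_mapLE B i : fam_mapL B i = f (B i). Proof. by rewrite lfunE ffunE. Qed.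

End PointwiseMap.

Section FamilyValuedMaps.
Variables (K : fieldType) (T E : vectType K).

Lemma dim_limg_tail s (S : {vspace T}) (be : 'Hom(T, {ffun 'I_s.+1 -> E})) :
  (\dim (be @: S) <=
     \dim ((tailL E s \o be) @: (S :&: lker (evL E ord0 \o be))) + \dim {:E})%N.
Proof.
set S' := (S :&: _)%VS.
have h1 : (\dim (be @: S) <= \dim (be @: S') + \dim ((evL E ord0 \o be) @: S))%N.
  exact: dim_limg_cap_lker.
have h2 : (\dim (be @: S') <= \dim ((tailL E s \o be) @: S'))%N.
  apply: dim_limg_leq; apply/subvP=> M /memv_capP[/memv_capP[_]].
  rewrite !memv_ker !comp_lfunE evLE tailLE => /eqP h0 /eqP tl0.
  by rewrite (fam_eq0 h0 tl0).
have h3 := dimvS (subvf ((evL E ord0 \o be) @: S)).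
lia.
Qed.

End FamilyValuedMaps.

Section FreeTranslate.
Variables (K : fieldType) (E : vectType K).

Lemma free_translate_head s (V : {vspace {ffun 'I_s.+1 -> E}}) (R : seq E)
    (B : {ffun 'I_s.+1 -> E}) z :
  free (R ++ codom (fam_tail B)) ->
  z \in (evL E ord0 @: (V :&: lker (tailL E s)))%VS ->
  z \notin <<R ++ codom (fam_tail B)>>%VS ->
  exists2 D, D \in V & free (R ++ codom (B + D)).
Proof.
move=> fr /memv_imgP[D /memv_capP[DV]].
rewrite memv_ker tailLE evLE => /eqP tD0 -> Dn.
have free_head x : x \notin <<R ++ codom (fam_tail B)>>%VS ->
    free (R ++ x :: codom (fam_tail B)).
  move=> xn; have /perm_free -> : perm_eq (R ++ [:: x] ++ codom (fam_tail B))
      (x :: R ++ codom (fam_tail B)) by rewrite perm_catCA.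
  by rewrite free_cons xn.
have [Bin|Bn] := boolP (B ord0 \in <<R ++ codom (fam_tail B)>>%VS); last first.
  by exists 0; rewrite ?mem0v // addr0 codom_fam free_head.
exists D => //; rewrite codom_fam ffunE.
have -> : fam_tail (B + D) = fam_tail B by rewrite linearD /= tD0 addr0.
apply: free_head; apply: contra Dn => BDin.
by rewrite -(addKr (B ord0) (D ord0)) memvD ?memvN.
Qed.

Lemma free_translate_step s (V : {vspace {ffun 'I_s.+1 -> E}}) (R : seq E)
    (B0 : {ffun 'I_s.+1 -> E}) (B1 : {ffun 'I_s -> E}) z :
  B1 - fam_tail B0 \in (tailL E s @: V)%VS -> free (R ++ codom B1) ->
  z \in (evL E ord0 @: (V :&: lker (tailL E s)))%VS -> z \notin <<R ++ codom B1>>%VS ->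
  exists2 B, B - B0 \in V & free (R ++ codom B).
Proof.
case/memv_imgP=> D1 D1V; rewrite tailLE => eB1.
have tl : fam_tail (B0 + D1) = B1 by rewrite linearD /= -eB1 addrC subrK.
rewrite -tl => fr zL zn; have [D DV fD] := free_translate_head fr zL zn.
by exists (B0 + D1 + D) => //; rewrite addrAC [B0 + D1]addrC addrK memvD.
Qed.

Lemma free_translate s (U : {vspace E}) (R : seq E)
    (V : {vspace {ffun 'I_s -> E}}) (B0 : {ffun 'I_s -> E}) :
  free R -> {subset R <= U} -> (forall B, B \in V -> forall i, B i \in U) ->
  (size R + s <= \dim U)%N -> (s * \dim U + size R + 1 <= \dim V + \dim U)%N ->
  exists2 B, B - B0 \in V & free (R ++ codom B).
Proof.
(* Split V into the space V1 of tails and the space L of heads of the tuples of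
   V with zero tail: the tail is chosen by induction, then the head is moved
   out of the span inside L. *)
elim: s R V B0 => [|s IH] R V B0 fR RU VU hsz hdim.
  by exists B0; rewrite ?subrr ?mem0v // codomE enum_ord0 cats0.
set V1 := (tailL E s @: V)%VS; set L := (evL E ord0 @: (V :&: lker (tailL E s)))%VS.
have dimV : \dim V = (\dim L + \dim V1)%N.
  by rewrite dim_head_cap_lker_tail limg_ker_dim.
have V1U B : B \in V1 -> forall i, B i \in U.
  by case/memv_imgP=> D DV -> i; rewrite tailLE ffunE VU.
have LU : (L <= U)%VS.
  by apply/subvP=> _ /memv_imgP[D /memv_capP[DV _] ->]; rewrite evLE VU.
have dimV1 : (\dim V1 <= s * \dim U)%N := dim_fam_leq V1U.
have dimL : (\dim L <= \dim U)%N := dimvS LU.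
rewrite dimV mulSn in hdim.
have [LR|/subvPn[r rL rR]] := boolP (L <= <<R>>)%VS.
  have : (\dim L <= size R)%N by rewrite -(eqP fR); apply: dimvS.
  lia.
have [UL|/negP UL] := boolP (U <= L)%VS.
  have dimV1R : (s * \dim U + size R + 1 <= \dim V1 + \dim U)%N by lia.
  have [B1 hB1 fB1] := IH R V1 (fam_tail B0) fR RU V1U ltac:(lia) dimV1R.
  have [z zU zn] : exists2 z, z \in U & z \notin <<R ++ codom B1>>%VS.
    apply/subvPn/negP=> /dimvS; have := dim_span (R ++ codom B1).
    by rewrite size_cat size_codom card_ord; lia.
  exact: free_translate_step hB1 fB1 (subvP UL z zU) zn.
have ltLU : (\dim L < \dim U)%N.
  by rewrite ltn_neqAle (dimv_leqif_sup LU).2 dimL andbT; apply/negP.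
have frR : free (r :: R) by rewrite free_cons rR.
have rRU : {subset r :: R <= U}.
  by move=> x; rewrite inE => /predU1P[->|/RU//]; apply: (subvP LU).
have dimV1R : (s * \dim U + size (r :: R) + 1 <= \dim V1 + \dim U)%N.
  by rewrite /=; lia.
have [B1 hB1] := IH (r :: R) V1 (fam_tail B0) frR rRU V1U ltac:(rewrite /=; lia) dimV1R.
by rewrite cat_cons free_cons => /andP[rn fB1]; apply: free_translate_step hB1 fB1 rL rn.
Qed.

End FreeTranslate.

Section Collinear.
Variables (K : fieldType) (T F : vectType K) (S : {vspace T}).

Lemma collinear_lfun_eq0 (f g : 'Hom(T, F)) M1 :
  (forall M, M \in S -> f M \in <[g M]>%VS) ->
  M1 \in S -> g M1 != 0 -> f M1 = 0 -> forall M, M \in S -> f M = 0.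
Proof.
move=> fg M1S gM1 fM1 M MS.
have [/vlineP[d gMd]|gMn] := boolP (g M \in <[g M1]>%VS).
  have MdS : M - d *: M1 \in S by rewrite memvB ?memvZ.
  have gN : g (M - d *: M1) = 0 by rewrite linearB linearZ /= gMd subrr.
  have /vlineP[k] := fg _ MdS; rewrite gN scaler0 linearB linearZ /= fM1.
  by rewrite scaler0 subr0.
have [c fMc] := vlineP _ _ (fg _ MS).
have [e] := vlineP _ _ (fg _ (memvD MS M1S)).
rewrite !linearD /= fM1 addr0 fMc => /eqP.
rewrite -subr_eq0 opprD addrA -scalerBl subr_eq0 => /eqP eq_ce.
have ce : c = e.
  apply/eqP; rewrite -subr_eq0; apply: contraR gMn => nz; apply/vlineP.
  by exists ((c - e)^-1 * e); rewrite -scalerA -eq_ce scalerA mulVf ?scale1r.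
move: eq_ce; rewrite ce subrr scale0r => /esym/eqP.
by rewrite scaler_eq0 (negPf gM1) orbF => /eqP->; rewrite scale0r.
Qed.

Lemma collinear_lfun_scale (f g : 'Hom(T, F)) :
  (forall M, M \in S -> f M \in <[g M]>%VS) ->
  exists t, forall M, M \in S -> f M = t *: g M.
Proof.
move=> fg; have [gS0|/subvPn[_ /memv_imgP[M1 M1S ->] gM1]] := boolP (g @: S <= 0)%VS.
  exists 0 => M MS; have /eqP gM0 : g M == 0.
    by rewrite -memv0 (subvP gS0) ?memv_img.
  by have /vlineP[k ->] := fg _ MS; rewrite gM0 !scaler0.
rewrite memv0 in gM1; have [t ft] := vlineP _ _ (fg _ M1S).
have fg' N : N \in S -> (f - t *: g)%VF N \in <[g N]>%VS.
  by move=> NS; rewrite !lfun_simp memvB ?memvZ ?fg ?memv_line.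
exists t => M MS; apply/eqP; rewrite -subr_eq0; apply/eqP.
have := collinear_lfun_eq0 fg' M1S gM1 _ MS; rewrite !lfun_simp; apply.
by rewrite ft subrr.
Qed.

End Collinear.

Section RowFamilies.
Variables (K : fieldType) (q : nat).
Local Notation E := 'rV[K]_q.

Lemma dim_rowv : \dim {: E} = q.
Proof. by rewrite dimvf /dim /= mul1n. Qed.

Definition fam_mx s (B : {ffun 'I_s -> E}) : 'M[K]_(s, q) := \matrix_i B i.

Lemma fam_mx_span s (B : {ffun 'I_s -> E}) v :
  (v <= fam_mx B)%MS -> v \in <<codom B>>%VS.
Proof.
case/submxP=> D ->; rewrite mulmx_sum_row; apply: memv_suml => i _.
by rewrite rowK memvZ // memv_span // codom_f.
Qed.

Lemma separating_form s (B : {ffun 'I_s -> E}) v : v \notin <<codom B>>%VS ->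
  exists2 y : 'cV[K]_q, (forall i, B i *m y = 0) & v *m y != 0.
Proof.
move=> vn; have : ~~ (v <= fam_mx B)%MS by apply: contra vn; apply: fam_mx_span.
rewrite submxE => /matrix0Pn[i [j vj]].
exists (cokermx (fam_mx B) *m delta_mx j 0).
  by move=> k; rewrite -(rowK B k) mulmxA -row_mul mulmx_coker row0 mul0mx.
apply: contra vj; rewrite mulmxA -colE => /eqP/matrixP/(_ 0 0).
by rewrite !mxE (ord1 i) => ->.
Qed.

Lemma row_free_fam_mx s (B : {ffun 'I_s -> E}) : free (codom B) -> row_free (fam_mx B).
Proof.
move=> fB; rewrite -kermx_eq0; apply/rowV0P=> u /sub_kermxP uB0; apply/rowP=> j.
have /freeP/(_ (u 0)) u0 : free (map_tuple B (ord_tuple s)) by [].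
rewrite mxE u0 // -[RHS]uB0 mulmx_sum_row; apply: eq_bigr => k _.
by rewrite rowK -tnth_nth tnth_map tnth_ord_tuple.
Qed.

End RowFamilies.

Section RangeCompatible.
Variables (K : fieldType) (q : nat) (T : vectType K).
Local Notation E := 'rV[K]_q.

Lemma memv_span_of_free s (S : {vspace T}) (be : 'Hom(T, {ffun 'I_s -> E}))
    (ga : 'Hom(T, E)) :
  (s < q)%N -> (s * q + 3 <= \dim (be @: S) + q)%N ->
  (forall M, M \in S -> free (codom (be M)) -> ga M \in <<codom (be M)>>%VS) ->
  forall M, M \in S -> ga M \in <<codom (be M)>>%VS.
Proof.
(* Pick a form y vanishing on beta(M) but not on gamma(M).  On the subspace H
   where y also kills beta and gamma, some beta(M + M') is free; then gamma(M + M')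
   lies in ker y, hence so does gamma(M). *)
move=> hq hd gaS M MS; apply: contraT => gMn.
have [y bMy gMy] := separating_form gMn.
pose phi : 'Hom(E, 'M[K]_1) := linfun (mulmxr y).
have phiE x : phi x = x *m y by rewrite lfunE.
rewrite -phiE in gMy.
pose U := lker phi.
pose H1 := (S :&: lker (fam_mapL phi s \o be))%VS.
pose H := (H1 :&: lker (phi \o ga))%VS.
have dimU : (\dim U).+1 = q by rewrite (dim_lker_form gMy) dim_rowv.
have HU B : B \in (be @: H)%VS -> forall i, B i \in U.
  case/memv_imgP=> M' /memv_capP[/memv_capP[_]].
  rewrite memv_ker comp_lfunE => /eqP bM' _ -> i.
  by rewrite memv_ker -fam_mapLE bM' ffunE.
have dimH : (s * \dim U + 1 <= \dim (be @: H) + \dim U)%N.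
  have h1 : (\dim (be @: S) <=
      \dim (be @: H1) + \dim ((fam_mapL phi s \o be) @: S))%N by apply: dim_limg_cap_lker.
  have h2 : (\dim (be @: H1) <= \dim (be @: H) + \dim ((phi \o ga) @: H1))%N.
    exact: dim_limg_cap_lker.
  have h3 : (\dim ((fam_mapL phi s \o be) @: S) <= s)%N.
    apply: leq_trans (dimvS (subvf _)) _.
    by rewrite dimvf /dim /= card_ord muln1.
  have h4 : (\dim ((phi \o ga) @: H1) <= 1)%N.
    by apply: leq_trans (dimvS (subvf _)) _; rewrite dimvf /dim /=.
  have sq : (s * q = s * \dim U + s)%N by rewrite -mulnSr dimU.
  lia.
have [B hB fB] := free_translate (be M) (nil_free _) (fun _ => ltac:(by [])) HU
  ltac:(by rewrite -ltnS dimU) ltac:(by rewrite addn0).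
case/memv_imgP: hB => M' M'H eB.
have [/memv_capP[M'S _]] := memv_capP M'H.
rewrite memv_ker comp_lfunE => /eqP gaM'.
have BE : B = be (M + M') by rewrite linearD /= -eB addrC subrK.
have gaB : ga (M + M') \in <<codom B>>%VS by rewrite BE gaS ?memvD -?BE.
have : (<<codom B>> <= U)%VS.
  apply/span_subvP=> _ /codomP[i ->]; rewrite BE linearD ffunE /=.
  apply: memvD; first by rewrite memv_ker phiE bMy.
  exact: HU (memv_img be M'H) i.
by move/subvP/(_ _ gaB); rewrite memv_ker !linearD /= gaM' addr0 (negPf gMy).
Qed.

Lemma memv_line_head_of_span s (S : {vspace T})
    (be : 'Hom(T, {ffun 'I_s.+1 -> E})) (ga : 'Hom(T, E)) :
  (s.+1 < q)%N ->
  (s * q + 3 <= \dim ((tailL E s \o be) @: (S :&: lker (evL E ord0 \o be))) + q)%N ->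
  (forall M, M \in S -> ga M \in <<codom (be M)>>%VS) ->
  (forall M, M \in S -> be M ord0 = 0 -> ga M = 0) ->
  forall M, M \in S -> ga M \in <[be M ord0]>%VS.
Proof.
move=> hq hd gaS ga0 M MS; apply: contraT => gMn.
set S' := (S :&: _)%VS in hd.
have bM0 : be M ord0 != 0.
  by apply: contra gMn => /eqP/(ga0 _ MS)->; rewrite mem0v.
have fR : free [:: ga M; be M ord0] by rewrite free_cons span_seq1 gMn seq1_free.
have [B hB] := free_translate (U := fullv) (V := ((tailL E s \o be) @: S')%VS)
  (fam_tail (be M)) fR (fun x _ => memvf x) (fun B _ i => memvf (B i))
  ltac:(by rewrite dim_rowv) ltac:(by rewrite dim_rowv -addnA).
case/memv_imgP: hB => M' /memv_capP[M'S].
rewrite memv_ker !comp_lfunE evLE tailLE => /eqP h0 eB.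
have B0 : be (M + M') ord0 = be M ord0 by rewrite linearD ffunE /= h0 addr0.
have BE : fam_tail (be (M + M')) = B by rewrite linearD /= linearD /= -eB addrC subrK.
have gaE : ga (M + M') = ga M by rewrite linearD /= (ga0 M') ?addr0.
have := gaS _ (memvD MS M'S); rewrite gaE codom_fam B0 BE.
by move=> gaB; rewrite /= free_cons gaB.
Qed.

Lemma lincomb_of_memv_span s (S : {vspace T}) (be : 'Hom(T, {ffun 'I_s -> E}))
    (ga : 'Hom(T, E)) :
  (s < q)%N -> (s * q + 3 <= \dim (be @: S) + q)%N ->
  (forall M, M \in S -> ga M \in <<codom (be M)>>%VS) ->
  exists a : 'I_s -> K, forall M, M \in S -> ga M = \sum_i a i *: be M i.
Proof.
(* Induction on s: the tail of be handles the subspace S' where the first vector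
   vanishes, and the remainder ga2 vanishes on S', so it is a multiple of the
   first vector. *)
elim: s S be ga => [|s IH] S be ga hq hd gaS.
  exists (fun _ => 0) => M MS; rewrite big_ord0; apply/eqP.
  by have := gaS M MS; rewrite codomE enum_ord0 span_nil memv0.
set S' := (S :&: lker (evL E ord0 \o be))%VS; set be' := (tailL E s \o be)%VF.
have hd' : (s * q + 3 <= \dim (be' @: S') + q)%N.
  have hS : (s * q + 3 <= \dim (be @: S))%N by move: hd; rewrite mulSn; lia.
  by apply: leq_trans hS _; have := dim_limg_tail S be; rewrite dim_rowv.
have [a' ha'] : exists a' : 'I_s -> K,
    forall M, M \in S' -> ga M = \sum_i a' i *: be' M i.
  apply: IH => [|//|M]; first exact: ltnW.
  case/memv_capP=> MS; rewrite memv_ker comp_lfunE evLE => /eqP h0.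
  have line0 : <[0 : E]>%VS = 0%VS by apply/eqP; rewrite -dimv_eq0 dim_vline eqxx.
  by have := gaS M MS; rewrite codom_fam h0 span_cons line0 add0v comp_lfunE tailLE.
pose ga2 := (ga - \sum_i a' i *: (evL E (lift ord0 i) \o be))%VF.
have ga2E M : ga2 M = ga M - \sum_i a' i *: be M (lift ord0 i).
  rewrite !lfun_simp; congr (_ - _); apply: eq_bigr => i _.
  by rewrite scale_lfunE comp_lfunE evLE.
have [t ht] : exists t, forall M, M \in S -> ga2 M = t *: (evL E ord0 \o be)%VF M.
  apply: collinear_lfun_scale => M MS; rewrite comp_lfunE evLE.
  apply: memv_line_head_of_span hq hd' _ _ M MS => M MS.
    rewrite ga2E memvB ?gaS // memv_suml // => i _.
    by rewrite memvZ // memv_span // codom_f.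
  move=> h0; rewrite ga2E ha'; last first.
    by rewrite /S' memv_cap MS memv_ker comp_lfunE evLE h0 eqxx.
  apply/eqP; rewrite subr_eq0; apply/eqP/eq_bigr => i _.
  by rewrite /be' comp_lfunE tailLE ffunE.
exists (fun i => if unlift ord0 i is Some j then a' j else t) => M MS.
rewrite big_ord_recl unlift_none; under eq_bigr do rewrite liftK.
have := ht M MS; rewrite comp_lfunE evLE ga2E => /eqP; rewrite subr_eq => /eqP->.
by rewrite addrC.
Qed.

Lemma lincomb_of_free s (S : {vspace T}) (be : 'Hom(T, {ffun 'I_s -> E}))
    (ga : 'Hom(T, E)) :
  (s < q)%N -> (s * q + 3 <= \dim (be @: S) + q)%N ->
  (forall M, M \in S -> free (codom (be M)) -> ga M \in <<codom (be M)>>%VS) ->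
  exists a : 'I_s -> K, forall M, M \in S -> ga M = \sum_i a i *: be M i.
Proof.
by move=> hq hd gaS; apply: lincomb_of_memv_span hq hd (memv_span_of_free hq hd gaS).
Qed.

End RangeCompatible.

Section Alternating.
Variables (K : fieldType) (p : nat).
Implicit Types M : 'M[K]_p.

Lemma alternating_trmx M : alternating M -> M^T = - M.
Proof. by case/andP=> /eqP. Qed.

Lemma alternating_diag M i : alternating M -> M i i = 0.
Proof. by case/andP=> _ /forallP/(_ i)/eqP. Qed.

Lemma alternating_skew M i j : alternating M -> M j i = - M i j.
Proof. by move/alternating_trmx/matrixP/(_ i j); rewrite !mxE. Qed.

Lemma alternating_form0 M (x : 'rV[K]_p) : alternating M -> x *m M *m x^T = 0.
Proof.
move=> altM; pose U := \matrix_(i, j) (if (i < j)%N then M i j else 0).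
have -> : M = U - U^T.
  apply/matrixP=> i j; rewrite !mxE; case: ltngtP => [||/val_inj->].
  - by rewrite subr0.
  - by rewrite sub0r -alternating_skew.
  - by rewrite alternating_diag // subrr.
rewrite mulmxBr mulmxBl.
have -> : x *m U^T *m x^T = (x *m U *m x^T)^T by rewrite !trmx_mul trmxK mulmxA.
by apply/matrixP=> i j; rewrite !mxE !ord1 subrr.
Qed.

Lemma alternating_congr M (Q : 'M[K]_p) :
  alternating M -> alternating (Q *m M *m Q^T).
Proof.
move=> altM; apply/andP; split.
  by rewrite !trmx_mul trmxK (alternating_trmx altM) mulNmx mulmxN mulmxA.
apply/forallP=> i.
have -> : (Q *m M *m Q^T) i i = (row i Q *m M *m (row i Q)^T) 0 0.
  by rewrite -row_mul !mxE; apply: eq_bigr => k _; rewrite !mxE.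
by rewrite alternating_form0 // mxE.
Qed.

Lemma WA1_upper s M : alternating M ->
  (forall i j : 'I_p, (s <= i)%N -> (i < j)%N -> M i j = 0) -> WA1 s M.
Proof.
move=> altM M0; rewrite /WA1 altM; apply/'forall_forallP=> i j.
apply/implyP=> /andP[/andP[si sj] _]; apply/eqP.
case: (ltngtP i j) => [ij|ji|/val_inj->]; first exact: M0.
  by rewrite alternating_skew // M0 ?oppr0.
exact: alternating_diag.
Qed.

End Alternating.

Section SkewRank.
Variable K : fieldType.

Lemma unitmx_block_1N1 k (A : 'M[K]_k) : block_mx A 1%:M (- 1%:M) 0 \in unitmx.
Proof.
case: (@mulmx1_unit _ _ (block_mx A 1%:M (- 1%:M) 0) (block_mx 0 (- 1%:M) 1%:M A)) => //.
rewrite mulmx_block !mulmx0 !mul0mx !mulmx1 !mul1mx !addr0 !add0r mulmxN mulmx1.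
by rewrite addNr mulNmx mulmxN mulmx1 opprK scalar_mx_block.
Qed.

Lemma rowsub_mul_trmx a b n (f : 'I_a -> 'I_n) (g : 'I_b -> 'I_n) (M : 'M[K]_n) :
  rowsub f 1%:M *m M *m (rowsub g 1%:M)^T = mxsub f g M.
Proof. by rewrite -rowsubE trmx_mxsub trmx1 mulmx_colsub mulmx1 [RHS]mxsubcr. Qed.

Lemma skew_mxrank_ge r k n (M : 'M[K]_n) (f : 'I_r -> 'I_n) (h : 'I_k -> 'I_n) :
  M^T = - M -> mxsub h h M = 0 -> row_free (mxsub f h M) -> (r + r <= \rank M)%N.
Proof.
(* With C a right inverse of mxsub f h M, the congruence by col_mx F (C^T H)
   turns M into the invertible block matrix [[_, 1], [-1, 0]]. *)
move=> skM hh0 /row_freeP[C fhC].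
pose F : 'M[K]_(r, n) := rowsub f 1%:M; pose H : 'M[K]_(k, n) := rowsub h 1%:M.
pose G := C^T *m H.
have FH : F *m M *m H^T = mxsub f h M by apply: rowsub_mul_trmx.
have HF : H *m M *m F^T = - (mxsub f h M)^T.
  by rewrite -FH !trmx_mul trmxK skM mulNmx mulmxN opprK mulmxA.
have HH : H *m M *m H^T = 0 by rewrite rowsub_mul_trmx.
have : col_mx F G *m M *m (col_mx F G)^T = block_mx (F *m M *m F^T) 1%:M (- 1%:M) 0.
  rewrite mul_col_mx tr_col_mx mul_col_row; congr block_mx.
  - by rewrite /G trmx_mul trmxK !mulmxA FH fhC.
  - by rewrite /G -!mulmxA (mulmxA H) HF mulmxN -trmx_mul fhC trmx1.
  - rewrite /G trmx_mul trmxK -!mulmxA (mulmxA H) (mulmxA (H *m M)) HH.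
    by rewrite mul0mx mulmx0.
move=> eO; have := mxrank_unit (unitmx_block_1N1 (F *m M *m F^T)); rewrite -eO => <-.
by apply: leq_trans (mxrankM_maxl _ _) _; apply: mxrankM_maxr.
Qed.

End SkewRank.

Lemma unitmx_1sub_sqr0 (K : fieldType) n (N : 'M[K]_n) :
  N *m N = 0 -> 1%:M - N \in unitmx.
Proof.
move=> NN; case: (@mulmx1_unit _ _ (1%:M - N) (1%:M + N)) => //.
by rewrite mulmxBl mul1mx mulmxDr mulmx1 NN addr0 addrK.
Qed.

Lemma card_lt_pairs s : #|{: {j : 'I_s & 'I_j}}| = 'C(s, 2).
Proof.
rewrite card_tagged -bin2_sum sumnE /index_iota subn0 -val_enum_ord.
by congr (\sum_(i <- _) i)%N; apply: eq_map => i; rewrite card_ord.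
Qed.

Fact upleft_is_linear (K : fieldType) n : linear (@upleft K n).
Proof. by move=> a A B; apply/matrixP=> i j; rewrite !mxE. Qed.
HB.instance Definition _ (K : fieldType) n :=
  GRing.isLinear.Build K _ _ _ (@upleft K n) (@upleft_is_linear K n).

Section LastRowReduction.
Variables (K : fieldType) (m s : nat).
Local Notation q := (m - s)%N.
Implicit Types M : 'M[K]_m.+1.

(* In a matrix of size m+1, the middle columns are s..m-1: [top_mid M] lists
   the middle parts of the rows 0..s-1 and [last_mid M] that of the last row. *)
Definition top_mid M : {ffun 'I_s -> 'rV[K]_q} :=
  [ffun i : 'I_s => \row_(j < q) M (inord i) (inord (s + j))].
Definition last_mid M : 'rV[K]_q := \row_(j < q) M ord_max (inord (s + j)).

Fact top_mid_is_linear : linear top_mid.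
Proof.
by move=> a A B; apply/ffunP=> i; rewrite !ffunE; apply/rowP=> j; rewrite !mxE.
Qed.
HB.instance Definition _ := GRing.isLinear.Build K _ _ _ top_mid top_mid_is_linear.
Fact last_mid_is_linear : linear last_mid.
Proof. by move=> a A B; apply/rowP=> j; rewrite !mxE. Qed.
HB.instance Definition _ := GRing.isLinear.Build K _ _ _ last_mid last_mid_is_linear.

Lemma upleftE M (i j : 'I_m) : upleft M i j = M (inord i) (inord j).
Proof.
by rewrite mxE; congr (M _ _); apply: val_inj; rewrite /= inordK // ltnW ?ltnS.
Qed.

Lemma mid_block0 M : alternating M -> WA1 s (upleft M) ->
  forall i j : 'I_m.+1, (s <= i < m)%N -> (s <= j < m)%N -> M i j = 0.
Proof.
case/andP=> _ /forallP M0 /andP[_ /'forall_forallP W0] i j /andP[si im] /andP[sj jm].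
have [->|ij] := eqVneq i j; first exact/eqP.
have /implyP/(_ _)/eqP := W0 (Ordinal im) (Ordinal jm).
rewrite upleftE /= !inord_val si sj; apply.
by move: ij; rewrite -val_eqE leq_max /=; lia.
Qed.

Lemma last_mid_span M : alternating M -> WA1 s (upleft M) ->
  (\rank M <= 2 * s)%N -> free (codom (top_mid M)) ->
  last_mid M \in <<codom (top_mid M)>>%VS.
Proof.
move=> altM WM rkM fT; apply: contraT => Ln.
pose f (i : 'I_s.+1) : 'I_m.+1 := if unlift ord0 i is Some j then inord j else ord_max.
pose h (j : 'I_q) : 'I_m.+1 := inord (s + j).
have hE j : h j = s + j :> nat by rewrite inordK //; have := ltn_ord j; lia.
have hh0 : mxsub h h M = 0.
  apply/matrixP=> i j; rewrite !mxE; apply: mid_block0 => //; rewrite hE leq_addr /=;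
    by have := ltn_ord i; have := ltn_ord j; lia.
pose B := [ffun i => row i (mxsub f h M)].
have B0 : B ord0 = last_mid M by apply/rowP=> j; rewrite !ffunE !mxE /f unlift_none.
have Btl : fam_tail B = top_mid M.
  by apply/ffunP=> i; apply/rowP=> j; rewrite !ffunE !mxE /f liftK.
have fB : free (codom B) by rewrite codom_fam B0 Btl free_cons Ln.
have : row_free (mxsub f h M).
  have := row_free_fam_mx fB; congr row_free.
  by apply/row_matrixP=> i; rewrite rowK ffunE.
move/(skew_mxrank_ge (alternating_trmx altM) hh0); lia.
Qed.

Lemma upleft_eq0 M : alternating M -> WA1 s (upleft M) -> top_mid M = 0 ->
  (forall i j : 'I_m.+1, (i < j < s)%N -> M i j = 0) -> upleft M = 0.
Proof.
move=> altM WM T0 U0.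
have row0 (i j : 'I_m.+1) : (i < s)%N -> (j < m)%N -> M i j = 0.
  move=> iS jm; case: (ltngtP i j) => [ij|ji|/val_inj->]; last exact: alternating_diag.
    case: (ltnP j s) => [js|sj]; first by apply: U0; rewrite ij.
    have jq : (j - s < q)%N by lia.
    have /ffunP/(_ (Ordinal iS))/rowP/(_ (Ordinal jq)) := T0.
    by rewrite !ffunE !mxE /= subnKC // !inord_val.
  by rewrite alternating_skew // U0 ?oppr0 // ji iS.
apply/matrixP=> i j; rewrite upleftE mxE.
have iE : (inord i : 'I_m.+1) = i :> nat by rewrite inordK // ltnS ltnW.
have jE : (inord j : 'I_m.+1) = j :> nat by rewrite inordK // ltnS ltnW.
case: (ltnP i s) => iS; first by apply: row0; rewrite ?iE ?jE.
case: (ltnP j s) => jS; first by rewrite alternating_skew // row0 ?oppr0 ?iE ?jE.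
by apply: mid_block0; rewrite ?iE ?jE ?iS ?jS ?ltn_ord.
Qed.

Definition upper_coords M : {ffun {j : 'I_s & 'I_j} -> K^o} :=
  [ffun x : {j : 'I_s & 'I_j} => M (inord (tagged x)) (inord (tag x))].

Fact upper_coords_is_linear : linear upper_coords.
Proof. by move=> a A B; apply/ffunP=> x; rewrite !ffunE !mxE. Qed.
HB.instance Definition _ :=
  GRing.isLinear.Build K _ _ _ upper_coords upper_coords_is_linear.

Lemma dim_upleft_leq (S : {vspace 'M[K]_m.+1}) :
  (forall M, M \in S -> alternating M) -> (forall M, M \in S -> WA1 s (upleft M)) ->
  (\dim (linfun (@upleft K m.+1) @: S) <= 'C(s, 2) + \dim (linfun top_mid @: S))%N.
Proof.
move=> altS WS; set P := linfun _; set T := linfun top_mid.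
apply: leq_trans (dim_limg_cap_lker S P T) _; rewrite leq_add2r.
apply: leq_trans (dim_limg_leq (g := linfun upper_coords) _) _.
  apply/subvP=> M; rewrite !memv_cap !memv_ker !lfunE /=.
  case/andP=> /andP[MS /eqP T0] /eqP/ffunP U0; apply/eqP/upleft_eq0; rewrite ?altS ?WS //.
  move=> i j /andP[ij js]; have := U0 (existT _ (Ordinal js) (Ordinal ij)).
  by rewrite !ffunE /= !inord_val.
apply: leq_trans (dimvS (subvf _)) _.
by rewrite dimvf /dim /= card_lt_pairs muln1.
Qed.

Definition shear (a : 'I_s -> K) : 'M[K]_m.+1 :=
  \sum_t a t *: delta_mx ord_max (inord t).

Lemma shear_mulmx a (X : 'M[K]_m.+1) i j :
  (shear a *m X) i j = (i == ord_max)%:R * \sum_t a t * X (inord t) j.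
Proof.
rewrite mulmx_suml summxE mulr_sumr; apply: eq_bigr => t _.
have dX : (delta_mx ord_max (inord t) *m X) i j = (i == ord_max)%:R * X (inord t) j.
  rewrite mxE (bigD1 (inord t)) //= mxE eqxx andbT big1 ?addr0 // => k kt.
  by rewrite mxE (negPf kt) andbF mul0r.
by rewrite -scalemxAl mxE dX mulrCA.
Qed.

Lemma shear_sqr0 a : (s <= m)%N -> shear a *m shear a = 0.
Proof.
move=> sm; apply/matrixP=> i j; rewrite shear_mulmx mxE big1 ?mulr0 // => t _.
rewrite summxE big1 ?mulr0 // => u _; rewrite !mxE -val_eqE /= inordK; last first.
  by have := ltn_ord t; lia.
have /negPf-> : (t : nat) != m by have := ltn_ord t; lia.
by rewrite mulr0.
Qed.

Lemma WA1_shear_congr M a : alternating M -> WA1 s (upleft M) ->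
  last_mid M = \sum_t a t *: top_mid M t ->
  WA1 s ((1%:M - shear a) *m M *m (1%:M - shear a)^T).
Proof.
move=> altM WM LM; set Q := 1%:M - shear a.
have QE (X : 'M[K]_m.+1) i j :
    (Q *m X) i j = X i j - (i == ord_max)%:R * \sum_t a t * X (inord t) j.
  by rewrite mulmxBl mul1mx 2!mxE shear_mulmx.
apply: WA1_upper; first exact: alternating_congr.
move=> i j si ij.
have iM : i != ord_max by rewrite -val_eqE /=; have := ltn_ord j; lia.
have -> : (Q *m M *m Q^T) i j = - (Q *m M) j i.
  rewrite -mulmxA -[M *m Q^T]trmxK trmx_mul trmxK (alternating_trmx altM).
  by rewrite mulmxN raddfN /= mulmxN mxE QE (negPf iM) mul0r subr0 mxE.
have [->|jM] := eqVneq j ord_max; last first.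
  have jm : (j < m)%N by move: jM; rewrite -val_eqE /=; have := ltn_ord j; lia.
  rewrite QE (negPf jM) mul0r subr0 mid_block0 ?oppr0 // ?si ?jm //=; lia.
have iq : (i - s < q)%N by have := ltn_ord j; lia.
have hL : M ord_max i = \sum_t a t * M (inord t) i.
  have /rowP/(_ (Ordinal iq)) := LM; rewrite summxE !mxE /= subnKC // inord_val => ->.
  by apply: eq_bigr => t _; rewrite !mxE ffunE mxE subnKC // inord_val.
by rewrite QE eqxx mul1r hL subrr oppr0.
Qed.

End LastRowReduction.

Unset Implicit Arguments.

Theorem proposition4p3 (K : fieldType) (n s : nat) (S : {vspace 'M[K]_n}) :
  (0 < n)%N -> (0 < s)%N -> (2 * s < n - 1)%N ->
  (forall M, M \in S -> alternating M) ->
  (forall M, M \in S -> WA1 s (upleft M)) ->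
  ((a_dim n.-1 s)%:Z - (n%:Z - s%:Z - 3) < (\dim (linfun (@upleft K n) @: S)%VS)%:Z) ->
  (forall M, M \in S -> (\rank M <= 2 * s)%N) ->
  exists2 Q : 'M[K]_n, Q \in unitmx &
    forall M, M \in S -> WA1 s (Q *m M *m Q^T).
Proof.
case: n S => [//|m] S _ _ hsn altS WS hd rkS.
have sm : (s <= m)%N by lia.
have hq : (s < m - s)%N by lia.
have dim_top : (s * (m - s) + 3 <= \dim (linfun (@top_mid K m s) @: S) + (m - s))%N.
  have := dim_upleft_leq altS WS; move: hd; rewrite /a_dim /=.
  set d := \dim (linfun _ @: S); set w := (s * (m - s))%N; lia.
have span_last M : M \in S -> free (codom (linfun (@top_mid K m s) M)) ->
    linfun (@last_mid K m s) M \in <<codom (linfun (@top_mid K m s) M)>>%VS.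
  by move=> MS; rewrite !lfunE; apply: last_mid_span; rewrite ?altS ?WS ?rkS.
have [a ha] := lincomb_of_free hq dim_top span_last.
exists (1%:M - shear m a); first exact/unitmx_1sub_sqr0/shear_sqr0.
move=> M MS; apply: WA1_shear_congr; rewrite ?altS ?WS //.
by have := ha M MS; rewrite !lfunE.
Qed.
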